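(* Let $a,b>0$ with $a\neq2b$, $\eta\in(0,1]$, $T>0$ and $0<\tau\le T$. For two independent photons each in the double-exponential state $(a,b)$, each detected by a detector of efficiency $\eta$, define the coincidence probability $$p_{\mathrm{ph\text{-}ph}}(T,\tau)=\iint_{|t_1-t_2|\le\tau}p_T(t_1)\,p_T(t_2)\,dt_1\,dt_2 .$$ Then $$p_{\mathrm{ph\text{-}ph}}(T,\tau)\left(\frac{p_{\mathrm{det}}(T)}{\eta}\right)^2=\frac{a^2}{a^2-4b^2}(1-e^{-2b\tau})-\frac{4b^2}{a^2-4b^2}(1-e^{-a\tau})+\frac{a^2}{(a-2b)^2}(1-e^{2b\tau})e^{-4bT}+\frac{4b^2}{(a-2b)^2}(1-e^{a\tau})e^{-2aT}-\frac{4ab}{(a-2b)^2}\left(1-\frac{ae^{2b\tau}+2be^{a\tau}}{a+2b}\right)e^{-(a+2b)T}.$$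
   Context: $\Theta$ is the Heaviside step function. The double-exponential photon state $(a,b)$ is the mixture over emission times $t_0$ with density $p_{\mathrm{em}}(t_0)=ae^{-at_0}\Theta(t_0)$ of pure photons with temporal wave function $\psi_{t_0}(t)=\sqrt{2b}\,e^{-b(t-t_0)}\Theta(t-t_0)$. The detection-time density is $p(t)=\eta\int_0^\infty p_{\mathrm{em}}(t_0)|\psi_{t_0}(t)|^2dt_0$, the probability of detection within the detection time window $[0,T]$ is $p_{\mathrm{det}}(T)=\int_0^Tp(t)\,dt$, and the detection-time density conditioned on detection within $[0,T]$ is $p_T(t)=\Theta(t)\Theta(T-t)p(t)/p_{\mathrm{det}}(T)$. $\tau$ is the coincidence time window. *)

From HB Require Import structures.
From mathcomp Require Import all_boot all_order all_algebra.
From mathcomp Require Import all_classical all_reals all_analysis.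
Set Implicit Arguments. Unset Strict Implicit. Unset Printing Implicit Defensive.
Import Order.TTheory GRing.Theory Num.Theory.
Local Open Scope classical_set_scope.
Local Open Scope ring_scope.

Section Photon.
Variable R : realType.

(* Heaviside step function (value at 0 is immaterial: measure zero). *)
Definition heaviside (x : R) : R := if 0 <= x then 1 else 0.

Definition p_em (a t0 : R) : R := a * expR (- a * t0) * heaviside t0.

Definition psi (b t0 t : R) : R :=
  Num.sqrt (2 * b) * expR (- b * (t - t0)) * heaviside (t - t0).

(* detection-time density p(t) = η ∫_0^∞ p_em(t0) |psi_{t0}(t)|^2 dt0
   (the restriction to t0 >= 0 is carried by the Heaviside factor in p_em) *)
Definition p_dens (a b eta t : R) : R :=
  eta * Rintegral (@lebesgue_measure R) setT
          (fun t0 => p_em a t0 * (psi b t0 t) ^+ 2).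

Definition p_det (a b eta T : R) : R :=
  Rintegral (@lebesgue_measure R) `[0, T] (p_dens a b eta).

Definition p_cond (a b eta T t : R) : R :=
  heaviside t * heaviside (T - t) * p_dens a b eta t / p_det a b eta T.

(* p_{ph-ph}(T,τ) = ∬_{|t1-t2| <= τ} p_T(t1) p_T(t2) dt1 dt2
   (written as an iterated Lebesgue integral of a nonnegative integrand) *)
Definition p_phph (a b eta T tau : R) : R :=
  Rintegral (@lebesgue_measure R) setT (fun t1 =>
    Rintegral (@lebesgue_measure R) setT (fun t2 =>
      (if `|t1 - t2| <= tau then 1 else 0) *
      p_cond a b eta T t1 * p_cond a b eta T t2)).

End Photon.

From HB Require Import structures.
From mathcomp Require Import all_boot all_order all_algebra.
From mathcomp Require Import all_classical all_reals all_analysis.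
From mathcomp Require Import ring lra.
Import Order.TTheory GRing.Theory Num.Theory.
Import numFieldNormedType.Exports.
Local Open Scope classical_set_scope.
Local Open Scope ring_scope.

(** For t >= 0 the detection density is p(t) = eta c (e^{-at} - e^{-2bt}) with
   c = 2ab/(2b - a), a finite sum of decaying exponentials with primitive F, and
   p_det(T) = eta (F T - F 0).  Integrating p_T(t2) over the window |t1 - t2| <= tau
   gives F (min T (t1 + tau)) - F (max 0 (t1 - tau)), so after splitting [0, T] at
   tau and T - tau the outer integral is a sum of four integrals of products
   p(t) F(t + d).  Products and translates of exponential sums are again exponential
   sums, so everything integrates in closed form, and the identity reduces to
   rational arithmetic in e^{aT}, e^{2bT}, e^{a tau}, e^{2b tau}. *)

Section ExponentialSums.
Context {R : realType}.
Notation mu := (@lebesgue_measure R).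
Implicit Types (s : seq (R * R)) (f F : R -> R) (u v t : R).

Lemma Rintegral_itv_derive f F u v : u <= v -> continuous f ->
  (forall x, is_derive x (1 : R) F (f x)) ->
  \int[mu]_(x in `[u, v]) f x = F v - F u.
Proof.
rewrite le_eqVlt => /predU1P[<-|uv] cf dF; first by rewrite set_itv1 Rintegral_set1 subrr.
have cF x : {for x, continuous F}.
  by apply: differentiable_continuous; apply/derivable1_diffP; have [] := dF x.
rewrite /Rintegral (@continuous_FTC2 _ f F u v uv) //=.
- exact: continuous_subspaceT.
- split; first by move=> x _; have [] := dF x.
  + exact: cvg_at_right_filter (cF u).
  + exact: cvg_at_left_filter (cF v).
- by move=> x _; rewrite derive1E; have [_ ->] := dF x.
Qed.

Lemma integrable_continuous_itv u v f : continuous f ->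
  mu.-integrable `[u, v] (EFin \o f).
Proof.
move=> cf; apply: continuous_compact_integrable; first exact: segment_compact.
exact: continuous_subspaceT.
Qed.

Lemma Rintegral_itv_split f u x v : u <= x -> x <= v -> continuous f ->
  \int[mu]_(t in `[u, v]) f t =
  \int[mu]_(t in `[u, x]) f t + \int[mu]_(t in `[x, v]) f t.
Proof.
move=> ux xv cf.
have := @Rintegral_itvB R f (BLeft u) (BRight v) x (integrable_continuous_itv u v f cf).
rewrite !bnd_simp => /(_ ux xv) h.
rewrite Rintegral_itv_obnd_cbnd in h; first by rewrite -h subrKC.
apply: (integrableS _ _ _ (integrable_continuous_itv x v f cf)) => //.
exact: subset_itv_oc_cc.
Qed.

Lemma Rintegral_setT_cond (D : set R) f g :
  (forall x, f x = if x \in D then g x else 0) ->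
  \int[mu]_(x in setT) f x = \int[mu]_(x in D) g x.
Proof.
move=> fg; rewrite [RHS]Rintegral_mkcond; apply: eq_Rintegral => x _.
by rewrite patchE fg.
Qed.

Definition expsum s t : R := \sum_(p <- s) p.1 * expR (p.2 * t).

Definition expsum_prim s : R -> R := expsum [seq (p.1 / p.2, p.2) | p <- s].

Definition expsum_mul s1 s2 : seq (R * R) :=
  [seq (p.1 * q.1, p.2 + q.2) | p <- s1, q <- s2].

Definition expsum_shift (d : R) s : seq (R * R) :=
  [seq (p.1 * expR (p.2 * d), p.2) | p <- s].

Lemma is_derive_scaled_expR (c k x : R) :
  is_derive x (1 : R) (fun t => c * expR (k * t)) (c * k * expR (k * x)).
Proof.
have dk : is_derive x (1 : R) ( *%R k) k.
  by apply: is_derive_eq; rewrite /GRing.scale /= mulr1.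
have := is_deriveZ c (is_derive1_comp (is_derive_expR (k * x)) dk).
by rewrite [X in is_derive _ _ _ X](_ : _ = c * k * expR (k * x)) //= /GRing.scale /=; ring.
Qed.

Lemma is_derive_expsum s x :
  is_derive x (1 : R) (expsum s) (\sum_(p <- s) p.1 * p.2 * expR (p.2 * x)).
Proof.
elim: s => [|p s IH].
  have -> : expsum [::] = cst 0 by apply: funext => t; rewrite /expsum big_nil.
  by rewrite big_nil; exact: is_derive_cst.
have -> : expsum (p :: s) = (fun t => p.1 * expR (p.2 * t)) + expsum s.
  by apply: funext => t; rewrite /expsum big_cons.
by rewrite big_cons; apply: is_deriveD (is_derive_scaled_expR _ _ _) IH.
Qed.

Lemma continuous_expsum s : continuous (expsum s).
Proof.
move=> x; apply: differentiable_continuous; apply/derivable1_diffP.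
by have [] := is_derive_expsum s x.
Qed.

Lemma is_derive_expsum_prim s x : all (fun p => p.2 != 0) s ->
  is_derive x (1 : R) (expsum_prim s) (expsum s x).
Proof.
move=> s_neq0; have -> : expsum s x =
    \sum_(p <- [seq (p.1 / p.2, p.2) | p <- s]) p.1 * p.2 * expR (p.2 * x).
  rewrite big_map /expsum; apply: eq_big_seq => p ps /=.
  by rewrite divfK //; move/allP: s_neq0 => /(_ p ps).
exact: is_derive_expsum.
Qed.

Lemma Rintegral_expsum s u v : u <= v -> all (fun p => p.2 != 0) s ->
  \int[mu]_(t in `[u, v]) expsum s t = expsum_prim s v - expsum_prim s u.
Proof.
move=> uv s_neq0; apply: Rintegral_itv_derive => //; first exact: continuous_expsum.
by move=> x; apply: is_derive_expsum_prim.
Qed.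

Lemma expsumM s1 s2 t :
  expsum s1 t * expsum s2 t = expsum (expsum_mul s1 s2) t.
Proof.
rewrite /expsum /expsum_mul big_allpairs_dep mulr_suml; apply: eq_bigr => p _.
rewrite mulr_sumr; apply: eq_bigr => q _ /=.
by rewrite mulrDl expRD mulrACA.
Qed.

Lemma expsumD s d t : expsum s (t + d) = expsum (expsum_shift d s) t.
Proof.
rewrite /expsum /expsum_shift big_map; apply: eq_bigr => p _ /=.
by rewrite mulrDr expRD mulrAC mulrA.
Qed.

Lemma continuous_expsum_mul_comp s1 s2 h : continuous h ->
  continuous (fun t => expsum s1 t * expsum s2 (h t)).
Proof.
move=> ch t; apply: continuousM; first exact: continuous_expsum.
exact: continuous_comp (ch t) (continuous_expsum _ _).
Qed.

Definition decaying s := all (fun p => p.2 < 0) s.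

Lemma decaying_neq0 {s} : decaying s -> all (fun p => p.2 != 0) s.
Proof. by apply: sub_all => p /ltr0_neq0. Qed.

Lemma decaying_mul {s1 s2} : decaying s1 -> decaying s2 -> decaying (expsum_mul s1 s2).
Proof.
move=> /allP s1_lt0 /allP s2_lt0; apply/all_allpairsP => p q ps qs /=.
exact: ltr_nDl (s1_lt0 p ps) (s2_lt0 q qs).
Qed.

Lemma decaying_shift d {s} : decaying s -> decaying (expsum_shift d s).
Proof. by rewrite /decaying all_map. Qed.

Lemma decaying_prim {s} : decaying s -> decaying [seq (p.1 / p.2, p.2) | p <- s].
Proof. by rewrite /decaying all_map. Qed.

Lemma Rintegral_expsum_mul_shift s1 s2 d u v : u <= v ->
  decaying s1 -> decaying s2 ->
  \int[mu]_(t in `[u, v]) (expsum s1 t * expsum s2 (t + d)) =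
  expsum_prim (expsum_mul s1 (expsum_shift d s2)) v -
  expsum_prim (expsum_mul s1 (expsum_shift d s2)) u.
Proof.
move=> uv s1_lt0 s2_lt0; rewrite -Rintegral_expsum //; last first.
  exact/decaying_neq0/decaying_mul/decaying_shift.
by apply: eq_Rintegral => t _; rewrite expsumD expsumM.
Qed.

End ExponentialSums.

Section DoubleExponential.
Context {R : realType} (a b : R).
Hypotheses (a_gt0 : 0 < a) (b_gt0 : 0 < b) (a_neq2b : a != 2 * b).
Notation mu := (@lebesgue_measure R).

Definition dens_terms : seq (R * R) :=
  let c := 2 * a * b / (2 * b - a) in [:: (c, - a); (- c, - (2 * b))].

Local Notation dens := (expsum dens_terms).
Local Notation dens_prim := (expsum_prim dens_terms).

Lemma decaying_dens_terms : decaying dens_terms.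
Proof. by rewrite /decaying /= !oppr_lt0 a_gt0 mulr_gt0. Qed.

Lemma p_dens_expsum (eta t : R) : 0 <= t -> p_dens a b eta t = eta * dens t.
Proof.
move=> t_ge0; rewrite /p_dens; congr (_ * _).
have ba_neq0 : 2 * b - a != 0 by rewrite subr_eq0 eq_sym.
rewrite (@Rintegral_setT_cond _ `[0, t] _
  (expsum [:: (2 * a * b * expR (- (2 * b) * t), 2 * b - a)])); last first.
  move=> x; rewrite /p_em /psi /heaviside subr_ge0 mem_setE in_itv /=.
  have [x_ge0|x_lt0] := leP 0 x; have [x_le|x_gt] := leP x t;
    rewrite ?(mulr0, mul0r, expr0n) //=.
  rewrite /expsum big_cons big_nil addr0 !mulr1 exprMn sqr_sqrtr ?mulr_ge0 ?ltW//.
  rewrite /= -expRM_natl.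
  transitivity (2 * a * b * expR (- a * x + 2%:R * (- b * (t - x)))).
    by rewrite expRD; ring.
  by rewrite -[RHS]mulrA -expRD; congr (_ * expR _); ring.
rewrite Rintegral_expsum //=; last by rewrite andbT.
rewrite /expsum_prim /expsum /= !big_cons !big_nil /= mulr0 expR0 !addr0.
have -> : expR ((2 * b - a) * t) = expR (- a * t) / expR (- (2 * b) * t).
  by rewrite -expRN -expRD; congr expR; ring.
by field; rewrite ba_neq0 expR_eq0.
Qed.

Lemma dens_gt0 (t : R) : 0 < t -> 0 < dens t.
Proof.
move=> t_gt0; have -> : dens t =
    2 * a * b * ((expR (- a * t) - expR (- (2 * b) * t)) / (2 * b - a)).
  by rewrite /expsum !big_cons big_nil /=; ring.
apply: mulr_gt0; first by rewrite !mulr_gt0.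
have [a_lt|a_gt|a_eq] := ltgtP a (2 * b).
- by apply: divr_gt0; rewrite subr_gt0 // ltr_expR; nra.
- rewrite -[X in X / _]opprB -[X in _ / X]opprB invrN mulrNN.
  by apply: divr_gt0; rewrite subr_gt0 // ltr_expR; nra.
- by move: a_neq2b; rewrite a_eq eqxx.
Qed.

Local Notation mass T := (dens_prim T - dens_prim 0).

Lemma mass_gt0 (T : R) : 0 < T -> 0 < mass T.
Proof.
move=> T_gt0; have d_dens x : is_derive x (1 : R) dens_prim (dens x).
  exact/is_derive_expsum_prim/decaying_neq0/decaying_dens_terms.
have [x /[!in_itv] /= /andP[x_gt0 _] ->] := MVT T_gt0 (fun x _ => d_dens x)
  (continuous_subspaceT (continuous_expsum _)).
by rewrite subr0 mulr_gt0 ?dens_gt0.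
Qed.

Lemma p_det_mass (eta T : R) : 0 <= T -> p_det a b eta T = eta * mass T.
Proof.
move=> T_ge0; rewrite /p_det (@eq_Rintegral _ _ _ mu _ (fun t => eta * dens t)).
  rewrite RintegralZl ?Rintegral_expsum ?decaying_neq0 ?decaying_dens_terms //.
  exact/integrable_continuous_itv/continuous_expsum.
by move=> t /[!inE] /= /[!in_itv] /andP[t_ge0 _]; exact: p_dens_expsum.
Qed.

Lemma p_cond_expsum (eta T t : R) : 0 < eta -> 0 < T ->
  p_cond a b eta T t = if t \in `[0, T]%classic then dens t / mass T else 0.
Proof.
move=> eta_gt0 T_gt0; rewrite /p_cond /heaviside mem_setE in_itv /= subr_ge0.
have [t_ge0|] := leP 0 t; have [t_le|] := leP t T; rewrite /= ?(mulr0, mul0r) //.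
rewrite p_dens_expsum // p_det_mass ?ltW // !mul1r invfM mulrACA divff ?gt_eqF //.
by rewrite mul1r.
Qed.

Lemma Rintegral_p_cond_window (eta T tau t1 : R) :
  0 < eta -> 0 < T -> 0 < tau ->
  \int[mu]_(t2 in setT)
    ((if `|t1 - t2| <= tau then 1 else 0) * p_cond a b eta T t1 * p_cond a b eta T t2) =
  p_cond a b eta T t1 / mass T *
    (dens_prim (Num.min T (t1 + tau)) - dens_prim (Num.max 0 (t1 - tau))).
Proof.
move=> eta_gt0 T_gt0 tau_gt0.
rewrite (@Rintegral_setT_cond _ `[Num.max 0 (t1 - tau), Num.min T (t1 + tau)] _
  (fun t2 => p_cond a b eta T t1 / mass T * dens t2)); last first.
  move=> t2; rewrite [p_cond _ _ _ _ t2]p_cond_expsum //.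
  rewrite !mem_setE !in_itv /= ge_max le_min distrC ler_distl.
  have [t1_in|t1_out] := boolP (t1 \in `[0, T]%classic); last first.
    by rewrite p_cond_expsum // (negbTE t1_out) !(mul0r, mulr0); case: ifP.
  move: t1_in; rewrite mem_setE in_itv /= => /andP[t1_ge0 t1_le].
  have [t2_ge0|] := leP 0 t2; have [t2_le|] := leP t2 T;
    have [lo|] := leP (t1 - tau) t2; have [hi|] := leP t2 (t1 + tau);
    rewrite /= ?(mul1r, mulr1, mul0r, mulr0) //; lra.
rewrite RintegralZl //; last exact/integrable_continuous_itv/continuous_expsum.
have [t1_in|t1_out] := boolP (t1 \in `[0, T]%classic); last first.
  by rewrite p_cond_expsum // (negbTE t1_out) !mul0r.
move: t1_in; rewrite mem_setE in_itv /= => /andP[t1_ge0 t1_le].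
rewrite Rintegral_expsum ?decaying_neq0 ?decaying_dens_terms //.
by rewrite ge_max !le_min; apply/andP; split; apply/andP; split; lra.
Qed.

Let continuous_window_hi (T tau : R) : continuous (fun t : R => Num.min T (t + tau)).
Proof.
move=> t; apply: (@continuous_min _ _ (cst T) (+%R^~ tau)); first exact: cst_continuous.
by apply: continuousD; [exact: cvg_id | exact: cst_continuous].
Qed.

Let continuous_window_lo (tau : R) : continuous (fun t : R => Num.max 0 (t - tau)).
Proof.
move=> t; apply: (@continuous_max _ _ (cst 0) (fun t => t - tau)); first exact: cst_continuous.
by apply: continuousB; [exact: cvg_id | exact: cst_continuous].
Qed.

Lemma continuous_dens_window (T tau : R) : continuous (fun t =>
  dens t * (dens_prim (Num.min T (t + tau)) - dens_prim (Num.max 0 (t - tau)))).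
Proof.
under eq_fun do rewrite mulrBr.
move=> t; apply: (continuousB
  (continuous_expsum_mul_comp _ _ _ (continuous_window_hi T tau) t)).
exact: continuous_expsum_mul_comp (continuous_window_lo tau) t.
Qed.

Lemma p_phph_mass (eta T tau : R) : 0 < eta -> 0 < T -> 0 < tau ->
  p_phph a b eta T tau * mass T ^+ 2 = \int[mu]_(t in `[0, T])
    (dens t * (dens_prim (Num.min T (t + tau)) - dens_prim (Num.max 0 (t - tau)))).
Proof.
move=> eta_gt0 T_gt0 tau_gt0; have mass_neq0 := lt0r_neq0 (mass_gt0 T T_gt0).
rewrite /p_phph (@eq_Rintegral _ _ _ mu _ _ _
  (fun t1 _ => Rintegral_p_cond_window eta T tau t1 eta_gt0 T_gt0 tau_gt0)).
rewrite (@Rintegral_setT_cond _ `[0, T] _ (fun t => (mass T ^+ 2)^-1 *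
  (dens t * (dens_prim (Num.min T (t + tau)) - dens_prim (Num.max 0 (t - tau)))))).
  rewrite RintegralZl //; last exact/integrable_continuous_itv/continuous_dens_window.
  by rewrite mulrC mulVKf // expf_neq0.
move=> t; rewrite p_cond_expsum //; case: ifP => _; last by rewrite !mul0r.
by rewrite expr2 invfM; ring.
Qed.

Local Notation prim_terms := [seq (p.1 / p.2, p.2) | p <- dens_terms].
Local Notation overlap d := (expsum_prim (expsum_mul dens_terms (expsum_shift d prim_terms))).

Lemma Rintegral_dens_window (T tau : R) : 0 < tau -> tau <= T ->
  \int[mu]_(t in `[0, T])
    (dens t * (dens_prim (Num.min T (t + tau)) - dens_prim (Num.max 0 (t - tau)))) =
  overlap tau (T - tau) - overlap tau 0 + dens_prim T * (dens_prim T - dens_prim (T - tau))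
  - (dens_prim 0 * (dens_prim tau - dens_prim 0) + (overlap (- tau) T - overlap (- tau) tau)).
Proof.
move=> tau_gt0 tau_le.
have dens_decay := decaying_dens_terms; have prim_decay := decaying_prim dens_decay.
have dens_neq0 := decaying_neq0 dens_decay.
under eq_Rintegral do rewrite mulrBr.
rewrite RintegralB //; last 2 first.
- exact/integrable_continuous_itv/continuous_expsum_mul_comp/continuous_window_hi.
- exact/integrable_continuous_itv/continuous_expsum_mul_comp/continuous_window_lo.
rewrite (Rintegral_itv_split _ 0 (T - tau) T); try lra; last first.
  exact/continuous_expsum_mul_comp/continuous_window_hi.
rewrite [X in _ - X](Rintegral_itv_split _ 0 tau T); try lra; last first.
  exact/continuous_expsum_mul_comp/continuous_window_lo.
rewrite (@eq_Rintegral _ _ _ mu `[0, T - tau] (fun t => dens t * dens_prim (t + tau))); last first.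
  by move=> t /[!inE] /= /[!in_itv] /= /andP[t_ge0 t_le]; rewrite min_r //; lra.
rewrite (@eq_Rintegral _ _ _ mu `[T - tau, T] (fun t => dens t * dens_prim T)); last first.
  by move=> t /[!inE] /= /[!in_itv] /= /andP[t_ge0 t_le]; rewrite min_l //; lra.
rewrite (@eq_Rintegral _ _ _ mu `[0, tau] (fun t => dens t * dens_prim 0)); last first.
  by move=> t /[!inE] /= /[!in_itv] /= /andP[t_ge0 t_le]; rewrite max_l //; lra.
rewrite (@eq_Rintegral _ _ _ mu `[tau, T] (fun t => dens t * dens_prim (t + - tau))); last first.
  by move=> t /[!inE] /= /[!in_itv] /= /andP[t_ge0 t_le]; rewrite max_r //; lra.
rewrite !RintegralZr //; try exact/integrable_continuous_itv/continuous_expsum.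
rewrite !Rintegral_expsum_mul_shift // ?Rintegral_expsum //; try lra.
Qed.

Lemma dens_window_closed_form (T tau : R) :
  overlap tau (T - tau) - overlap tau 0 + dens_prim T * (dens_prim T - dens_prim (T - tau))
  - (dens_prim 0 * (dens_prim tau - dens_prim 0) + (overlap (- tau) T - overlap (- tau) tau)) =
    a ^+ 2 / (a ^+ 2 - 4 * b ^+ 2) * (1 - expR (- (2 * b * tau)))
  - 4 * b ^+ 2 / (a ^+ 2 - 4 * b ^+ 2) * (1 - expR (- (a * tau)))
  + a ^+ 2 / (a - 2 * b) ^+ 2 * (1 - expR (2 * b * tau)) * expR (- (4 * b * T))
  + 4 * b ^+ 2 / (a - 2 * b) ^+ 2 * (1 - expR (a * tau)) * expR (- (2 * a * T))
  - 4 * a * b / (a - 2 * b) ^+ 2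
      * (1 - (a * expR (2 * b * tau) + 2 * b * expR (a * tau)) / (a + 2 * b))
      * expR (- ((a + 2 * b) * T)).
Proof.
have expR_sub (k x y : R) : expR (k * (x - y)) = expR (k * x) / expR (k * y).
  by rewrite mulrBr expRD expRN.
have expR_oppr (k x : R) : expR (k * - x) = (expR (k * x))^-1 by rewrite mulrN expRN.
have expR_oppl (k x : R) : expR (- k * x) = (expR (k * x))^-1 by rewrite mulNr expRN.
have expR_addl (k l x : R) : expR ((k + l) * x) = expR (k * x) * expR (l * x).
  by rewrite mulrDl expRD.
have expR_2aT : expR (2 * a * T) = expR (a * T) ^+ 2 by rewrite -mulrA expRM_natl.
have expR_4bT : expR (4 * b * T) = expR (2 * b * T) ^+ 2.
  by rewrite -expRM_natl; congr expR; ring.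
rewrite /expsum_prim /expsum /= !big_cons !big_nil /=.
rewrite !(expR_sub, expR_oppr, expR_addl, expR_oppl, expRN, mulr0, expR0).
rewrite expR_2aT expR_4bT.
(* [lra] only looks at the local context, not at section hypotheses. *)
have a_pos := a_gt0; have b_pos := b_gt0.
have a2b_neq0 : a - 2 * b != 0 by rewrite subr_eq0.
have b2a_neq0 : 2 * b - a != 0 by rewrite subr_eq0 eq_sym.
have sq_neq0 : a ^+ 2 - 4 * b ^+ 2 != 0.
  have -> : a ^+ 2 - 4 * b ^+ 2 = (a - 2 * b) * (a + 2 * b) by ring.
  by rewrite mulf_neq0 //; lra.
field; rewrite !expR_eq0 a2b_neq0 b2a_neq0 sq_neq0 /=.
by repeat (apply/andP; split); lra.
Qed.

End DoubleExponential.

Theorem theorem6 (R : realType) (a b eta T tau : R)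
  (ha : 0 < a) (hb : 0 < b) (hab : a != 2 * b)
  (heta0 : 0 < eta) (heta1 : eta <= 1)
  (hT : 0 < T) (htau0 : 0 < tau) (htauT : tau <= T) :
  p_phph a b eta T tau * (p_det a b eta T / eta) ^+ 2 =
    a ^+ 2 / (a ^+ 2 - 4 * b ^+ 2) * (1 - expR (- (2 * b * tau)))
  - 4 * b ^+ 2 / (a ^+ 2 - 4 * b ^+ 2) * (1 - expR (- (a * tau)))
  + a ^+ 2 / (a - 2 * b) ^+ 2 * (1 - expR (2 * b * tau)) * expR (- (4 * b * T))
  + 4 * b ^+ 2 / (a - 2 * b) ^+ 2 * (1 - expR (a * tau)) * expR (- (2 * a * T))
  - 4 * a * b / (a - 2 * b) ^+ 2
      * (1 - (a * expR (2 * b * tau) + 2 * b * expR (a * tau)) / (a + 2 * b))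
      * expR (- ((a + 2 * b) * T)).
Proof.
rewrite p_det_mass ?ltW // mulrAC divff ?gt_eqF // mul1r.
rewrite p_phph_mass // Rintegral_dens_window //.
exact: dens_window_closed_form.
Qed.
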